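(* Assume the counit $\epsilon:H\to k$ is an epimorphism in $\mathcal{C}$. For any object $V$ of $\mathcal{C}$, the quadruple $(V,V,V\otimes\epsilon,\mathrm{id}_V)$ (where $V\otimes H\to V\otimes k\cong V$) is a partial $H$-comodule datum, and it is always a geometric partial comodule (the trivial partial comodule structure on $V$). Moreover, the functor $T:\mathcal{C}\to\mathsf{PMod}^H$ assigning to each object its trivial partial comodule structure is fully faithful and is right adjoint to the forgetful functor $U:\mathsf{PMod}^H\to\mathcal{C}$, $U(X,X\bullet H,\pi_X,\rho_X)=X$, $U(f,f\bullet H)=f$.
   Context: $\mathcal{C}$ is a braided monoidal category with tensor $\otimes$, unit object $k$ and right unit isomorphism $r_X:X\to X\otimes k$, having all pushouts, with all functors $-\otimes Y$ and $Y\otimes-$ preserving pushouts. $(H,\Delta,\epsilon)$ is a coalgebra in $\mathcal{C}$. A partial comodule datum is a quadruple $(X,X\bullet H,\pi_X,\rho_X)$ with $\pi_X:X\otimes H\to X\bullet H$ an epimorphism and $\rho_X:X\to X\bullet H$ a morphism. Associated pushouts: $X\bullet k$ (pushout of $\pi_X$ and $X\otimes\epsilon$, legs $X\bullet\epsilon$, $\pi_{X,\epsilon}$); $(X\bullet H)\bullet H$ (pushout of $\pi_X$ and $\rho_X\otimes H$, legs $\rho_X\bullet H$, $\pi_{X\bullet H}:(X\bullet H)\otimes H\to(X\bullet H)\bullet H$); $X\bullet(H\otimes H)$ (pushout of $\pi_X$ and $X\otimes\Delta$, legs $X\bullet\Delta$, $\pi_{X,\Delta}$); $X\bullet(H\bullet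 H)$ (pushout of $\pi_{X,\Delta}$ and $\pi_X\otimes H$, legs $\pi'_X$, $\pi'_{X,\Delta}:(X\bullet H)\otimes H\to X\bullet(H\bullet H)$); $\Theta$ (pushout of $\pi_{X\bullet H}$ and $\pi'_{X,\Delta}$, legs $\theta_1,\theta_2$). Quasi partial comodule: [QPC1] $\pi_{X,\epsilon}$ is an isomorphism and $(X\bullet\epsilon)\rho_X=\pi_{X,\epsilon}r_X$; [QPC2] $\theta_1(\rho_X\bullet H)\rho_X=\theta_2\pi'_X(X\bullet\Delta)\rho_X$. Lax: additionally a morphism $\theta_X:X\bullet(H\bullet H)\to(X\bullet H)\bullet H$ with $\theta_X\pi'_{X,\Delta}=\pi_{X\bullet H}$ exists; geometric: this $\theta_X$ is an isomorphism. A morphism of partial comodule data $X\to Y$ is a pair $(f,f\bullet H)$ with $f:X\to Y$, $f\bullet H:X\bullet H\to Y\bullet H$, $(f\bullet H)\rho_X=\rho_Yf$ and $(f\bullet H)\pi_X=\pi_Y(f\otimes H)$. $\mathsf{PMod}^H$ denotes any one of the full subcategories $\mathsf{qPMod}^H,\mathsf{lPMod}^H,\mathsf{gPMod}^H$ of quasi, lax, geometric partial comodules. *)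

From Stdlib Require Import ProofIrrelevance.

Set Implicit Arguments.
Unset Strict Implicit.

Record Category := {
  ob :> Type;
  hom : ob -> ob -> Type;
  idm : forall A, hom A A;
  comp : forall A B C, hom B C -> hom A B -> hom A C;
  comp_idl : forall A B (f : hom A B), comp (idm B) f = f;
  comp_idr : forall A B (f : hom A B), comp f (idm A) = f;
  comp_assoc : forall A B C D (f : hom A B) (g : hom B C) (h : hom C D),
      comp h (comp g f) = comp (comp h g) f
}.

Arguments hom {c} A B.
Arguments idm {c} A.
Arguments comp {c A B C} g f.

Declare Scope cat_scope.
Open Scope cat_scope.
Notation "g ∘ f" := (comp g f) (at level 40, left associativity) : cat_scope.

Definition is_iso (C : Category) (A B : C) (f : hom A B) : Prop :=
  exists g : hom B A, g ∘ f = idm A /\ f ∘ g = idm B.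

Definition epi (C : Category) (A B : C) (f : hom A B) : Prop :=
  forall (Z : C) (u v : hom B Z), u ∘ f = v ∘ f -> u = v.

Definition is_pushout (C : Category) (A B C2 P : C)
    (f : hom A B) (g : hom A C2) (p1 : hom B P) (p2 : hom C2 P) : Prop :=
  p1 ∘ f = p2 ∘ g /\
  forall (Z : C) (u : hom B Z) (v : hom C2 Z),
    u ∘ f = v ∘ g -> exists! h : hom P Z, h ∘ p1 = u /\ h ∘ p2 = v.

Record HasPushouts (C : Category) := {
  po : forall (A B C2 : C), hom A B -> hom A C2 -> C;
  po_l : forall (A B C2 : C) (f : hom A B) (g : hom A C2), hom B (po f g);
  po_r : forall (A B C2 : C) (f : hom A B) (g : hom A C2), hom C2 (po f g);
  po_spec : forall (A B C2 : C) (f : hom A B) (g : hom A C2),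
      is_pushout f g (po_l f g) (po_r f g)
}.

Arguments po {C} h {A B C2} f g.
Arguments po_l {C} h {A B C2} f g.
Arguments po_r {C} h {A B C2} f g.

(** * Braided monoidal categories
    Unitors are oriented as in the paper:  r_X : X -> X ⊗ k,  l_X : X -> k ⊗ X;
    the associator is  a_{X,Y,Z} : (X ⊗ Y) ⊗ Z -> X ⊗ (Y ⊗ Z). *)

Record BraidedMonoidalCat := {
  bcat :> Category;
  tens : bcat -> bcat -> bcat;
  tensm : forall (A B C D : bcat), hom A B -> hom C D -> hom (tens A C) (tens B D);
  tensm_id : forall A C, tensm (idm A) (idm C) = idm (tens A C);
  tensm_comp : forall A B E C D F (f : hom A B) (g : hom B E) (f' : hom C D) (g' : hom D F),
      tensm (g ∘ f) (g' ∘ f') = tensm g g' ∘ tensm f f';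
  unitob : bcat;
  assoc : forall X Y Z, hom (tens (tens X Y) Z) (tens X (tens Y Z));
  assocI : forall X Y Z, hom (tens X (tens Y Z)) (tens (tens X Y) Z);
  assoc_inv1 : forall X Y Z, assocI X Y Z ∘ assoc X Y Z = idm _;
  assoc_inv2 : forall X Y Z, assoc X Y Z ∘ assocI X Y Z = idm _;
  assoc_nat : forall X X' Y Y' Z Z' (f : hom X X') (g : hom Y Y') (h : hom Z Z'),
      assoc X' Y' Z' ∘ tensm (tensm f g) h = tensm f (tensm g h) ∘ assoc X Y Z;
  lunit : forall X, hom X (tens unitob X);
  lunitI : forall X, hom (tens unitob X) X;
  lunit_inv1 : forall X, lunitI X ∘ lunit X = idm X;
  lunit_inv2 : forall X, lunit X ∘ lunitI X = idm _;
  lunit_nat : forall X Y (f : hom X Y), lunit Y ∘ f = tensm (idm unitob) f ∘ lunit X;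
  runit : forall X, hom X (tens X unitob);
  runitI : forall X, hom (tens X unitob) X;
  runit_inv1 : forall X, runitI X ∘ runit X = idm X;
  runit_inv2 : forall X, runit X ∘ runitI X = idm _;
  runit_nat : forall X Y (f : hom X Y), runit Y ∘ f = tensm f (idm unitob) ∘ runit X;
  pentagon : forall W X Y Z,
      assoc W X (tens Y Z) ∘ assoc (tens W X) Y Z =
      tensm (idm W) (assoc X Y Z) ∘ assoc W (tens X Y) Z ∘ tensm (assoc W X Y) (idm Z);
  triangle : forall X Y,
      assoc X unitob Y ∘ tensm (runit X) (idm Y) = tensm (idm X) (lunit Y);
  braid : forall X Y, hom (tens X Y) (tens Y X);
  braid_iso : forall X Y, is_iso (braid X Y);
  braid_nat : forall X X' Y Y' (f : hom X X') (g : hom Y Y'),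
      braid X' Y' ∘ tensm f g = tensm g f ∘ braid X Y;
  hexagon1 : forall X Y Z,
      assoc Y Z X ∘ braid X (tens Y Z) ∘ assoc X Y Z =
      tensm (idm Y) (braid X Z) ∘ assoc Y X Z ∘ tensm (braid X Y) (idm Z);
  hexagon2 : forall X Y Z,
      assocI Z X Y ∘ braid (tens X Y) Z ∘ assocI X Y Z =
      tensm (braid X Z) (idm Y) ∘ assocI X Z Y ∘ tensm (idm X) (braid Y Z)
}.

Arguments tens {b} X Y.
Arguments tensm {b A B C D} f g.
Arguments unitob {b}.
Arguments assoc {b} X Y Z.
Arguments assocI {b} X Y Z.
Arguments lunit {b} X.
Arguments lunitI {b} X.
Arguments runit {b} X.
Arguments runitI {b} X.
Arguments braid {b} X Y.

Notation "X ⊗ Y" := (tens X Y) (at level 35, right associativity) : cat_scope.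
Notation "f ⊠ g" := (tensm f g) (at level 35, right associativity) : cat_scope.

Definition tensor_preserves_pushouts (C : BraidedMonoidalCat) : Prop :=
  forall (Y A B C2 P : C) (f : hom A B) (g : hom A C2) (p1 : hom B P) (p2 : hom C2 P),
    is_pushout f g p1 p2 ->
    is_pushout (f ⊠ idm Y) (g ⊠ idm Y) (p1 ⊠ idm Y) (p2 ⊠ idm Y) /\
    is_pushout (idm Y ⊠ f) (idm Y ⊠ g) (idm Y ⊠ p1) (idm Y ⊠ p2).

Record Coalgebra (C : BraidedMonoidalCat) := {
  carrier : C;
  comul : hom carrier (carrier ⊗ carrier);
  counit : hom carrier unitob;
  coassoc : assoc carrier carrier carrier ∘ (comul ⊠ idm carrier) ∘ comul =
            (idm carrier ⊠ comul) ∘ comul;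
  counit_l : (counit ⊠ idm carrier) ∘ comul = lunit carrier;
  counit_r : (idm carrier ⊠ counit) ∘ comul = runit carrier
}.

Arguments carrier {C} c.
Arguments comul {C} c.
Arguments counit {C} c.

Record Functor (C D : Category) := {
  fob :> C -> D;
  fmap : forall A B : C, hom A B -> hom (fob A) (fob B);
  fmap_id : forall A, fmap (idm A) = idm (fob A);
  fmap_comp : forall A B E (f : hom A B) (g : hom B E), fmap (g ∘ f) = fmap g ∘ fmap f
}.

Arguments fmap {C D} _ {A B} _.

Definition bijective_map (A B : Type) (f : A -> B) : Prop :=
  exists g : B -> A, (forall x, g (f x) = x) /\ (forall y, f (g y) = y).

Definition fully_faithful (C D : Category) (F : Functor C D) : Prop :=
  forall A B : C, bijective_map (fun f : hom A B => fmap F f).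

Definition adjunction (C D : Category) (F : Functor C D) (G : Functor D C) : Prop :=
  exists phi : forall (A : C) (B : D), hom (F A) B -> hom A (G B),
    (forall A B, bijective_map (phi A B)) /\
    (forall (A A' : C) (B B' : D) (h : hom A' A) (f : hom (F A) B) (g : hom B B'),
        phi A' B' (g ∘ f ∘ fmap F h) = fmap G g ∘ phi A B f ∘ h).

Section PartialComodules.

Context (C : BraidedMonoidalCat) (PO : HasPushouts C) (H : Coalgebra C).

Local Notation Hc := (carrier H).
Local Notation Δ := (comul H).
Local Notation ε := (counit H).

Record pquad := {
  pX : C;
  pXH : C;
  ppi : hom (pX ⊗ Hc) pXH;
  prho : hom pX pXH
}.

Definition is_pdatum (D : pquad) : Prop := epi (ppi D).

Section Pushouts.
Variable D : pquad.
Local Notation X := (pX D).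
Local Notation XH := (pXH D).
Local Notation piX := (ppi D).
Local Notation rhoX := (prho D).

Definition Xk : C := po PO piX (idm X ⊠ ε).
Definition bullet_eps : hom XH Xk := po_l PO piX (idm X ⊠ ε).
Definition pi_eps : hom (X ⊗ unitob) Xk := po_r PO piX (idm X ⊠ ε).

Definition XHH : C := po PO piX (rhoX ⊠ idm Hc).
Definition rho_bullet : hom XH XHH := po_l PO piX (rhoX ⊠ idm Hc).
Definition pi_XH : hom (XH ⊗ Hc) XHH := po_r PO piX (rhoX ⊠ idm Hc).

Definition XHtH : C := po PO piX (idm X ⊠ Δ).
Definition bullet_Delta : hom XH XHtH := po_l PO piX (idm X ⊠ Δ).
Definition pi_Delta : hom (X ⊗ (Hc ⊗ Hc)) XHtH := po_r PO piX (idm X ⊠ Δ).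

(* X • (H • H): pushout of π_{X,Δ} and π_X ⊗ H, the latter precomposed
   with the associator  X ⊗ (H ⊗ H) ≅ (X ⊗ H) ⊗ H. *)
Definition XHbH : C := po PO pi_Delta ((piX ⊠ idm Hc) ∘ assocI X Hc Hc).
Definition pi' : hom XHtH XHbH := po_l PO pi_Delta ((piX ⊠ idm Hc) ∘ assocI X Hc Hc).
Definition pi'_Delta : hom (XH ⊗ Hc) XHbH :=
  po_r PO pi_Delta ((piX ⊠ idm Hc) ∘ assocI X Hc Hc).

Definition Theta : C := po PO pi_XH pi'_Delta.
Definition theta1 : hom XHH Theta := po_l PO pi_XH pi'_Delta.
Definition theta2 : hom XHbH Theta := po_r PO pi_XH pi'_Delta.

Definition QPC1 : Prop :=
  is_iso pi_eps /\ bullet_eps ∘ rhoX = pi_eps ∘ runit X.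

Definition QPC2 : Prop :=
  theta1 ∘ rho_bullet ∘ rhoX = theta2 ∘ pi' ∘ bullet_Delta ∘ rhoX.

Definition is_quasi : Prop := QPC1 /\ QPC2.

Definition is_lax : Prop :=
  is_quasi /\ exists thetaX : hom XHbH XHH, thetaX ∘ pi'_Delta = pi_XH.

Definition is_geometric : Prop :=
  is_quasi /\ exists thetaX : hom XHbH XHH, thetaX ∘ pi'_Delta = pi_XH /\ is_iso thetaX.

End Pushouts.

Definition is_pmorph (D E : pquad) (f : hom (pX D) (pX E)) (fH : hom (pXH D) (pXH E)) : Prop :=
  fH ∘ prho D = prho E ∘ f /\ fH ∘ ppi D = ppi E ∘ (f ⊠ idm Hc).

Inductive pvariant := Quasi | Lax | Geometric.

Definition pvariant_pred (v : pvariant) (D : pquad) : Prop :=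
  match v with
  | Quasi => is_quasi D
  | Lax => is_lax D
  | Geometric => is_geometric D
  end.

Definition in_PMod (v : pvariant) (D : pquad) : Prop := is_pdatum D /\ pvariant_pred v D.

Definition pmod_ob (v : pvariant) := { D : pquad | in_PMod v D }.

Record pmod_hom (D E : pquad) := {
  ph_f : hom (pX D) (pX E);
  ph_fH : hom (pXH D) (pXH E);
  ph_spec : is_pmorph ph_f ph_fH
}.

Lemma pmod_hom_eq (D E : pquad) (m n : pmod_hom D E) :
  ph_f m = ph_f n -> ph_fH m = ph_fH n -> m = n.
Proof.
  destruct m as [f fH p], n as [g gH q]; simpl; intros -> ->.
  rewrite (proof_irrelevance _ p q); reflexivity.
Qed.

Lemma pmod_id_spec (D : pquad) : is_pmorph (idm (pX D)) (idm (pXH D)).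
Proof.
  split.
  - rewrite comp_idl, comp_idr; reflexivity.
  - rewrite comp_idl, tensm_id, comp_idr; reflexivity.
Qed.

Lemma pmod_comp_spec (D E F : pquad) (g : pmod_hom E F) (f : pmod_hom D E) :
  is_pmorph (ph_f g ∘ ph_f f) (ph_fH g ∘ ph_fH f).
Proof.
  destruct g as [g gH [g1 g2]], f as [f fH [f1 f2]]; simpl; split.
  - rewrite <- comp_assoc, f1, comp_assoc, g1, comp_assoc; reflexivity.
  - rewrite <- comp_assoc, f2, comp_assoc, g2, <- comp_assoc, <- tensm_comp, comp_idl.
    reflexivity.
Qed.

Definition pmod_idm (D : pquad) : pmod_hom D D := Build_pmod_hom (pmod_id_spec D).
Definition pmod_comp (D E F : pquad) (g : pmod_hom E F) (f : pmod_hom D E) : pmod_hom D F :=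
  Build_pmod_hom (pmod_comp_spec g f).

Definition PMod (v : pvariant) : Category.
Proof.
  refine (@Build_Category (pmod_ob v) (fun D E => pmod_hom (proj1_sig D) (proj1_sig E))
            (fun D => pmod_idm (proj1_sig D)) (fun D E F g f => pmod_comp g f) _ _ _);
  intros; apply pmod_hom_eq; simpl;
  first [apply comp_idl | apply comp_idr | apply comp_assoc].
Defined.

Definition forgetU (v : pvariant) : Functor (PMod v) C.
Proof.
  refine (@Build_Functor (PMod v) C (fun D => pX (proj1_sig D))
            (fun D E m => ph_f m) _ _); reflexivity.
Defined.

Definition triv (V : C) : pquad :=
  {| pX := V; pXH := V; ppi := runitI V ∘ (idm V ⊠ ε); prho := idm V |}.

Lemma triv_pmorph (V W : C) (g : hom V W) : is_pmorph (D := triv V) (E := triv W) g g.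
Proof.
  unfold is_pmorph; simpl; split.
  - rewrite comp_idl, comp_idr; reflexivity.
  - assert (Hr : g ∘ runitI V = runitI W ∘ (g ⊠ idm unitob)).
    { transitivity (runitI W ∘ ((g ⊠ idm unitob) ∘ (runit V ∘ runitI V))).
      - rewrite (comp_assoc (runitI V) (runit V) (g ⊠ idm unitob)), <- runit_nat.
        rewrite !comp_assoc, runit_inv1, comp_idl; reflexivity.
      - rewrite runit_inv2, comp_idr; reflexivity. }
    rewrite comp_assoc, Hr, <- !comp_assoc, <- !tensm_comp, !comp_idl, !comp_idr.
    reflexivity.
Qed.

Definition triv_hom (V W : C) (g : hom V W) : pmod_hom (triv V) (triv W) :=
  Build_pmod_hom (triv_pmorph g).

(** Its object part needs that each trivial quadruple lies in
    PMod^H; this is supplied as the argument [hT] (and is itself asserted by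
    the main theorem). *)
Definition trivT (v : pvariant) (hT : forall V : C, in_PMod v (triv V)) : Functor C (PMod v).
Proof.
  refine (@Build_Functor C (PMod v) (fun V => exist _ (triv V) (hT V))
            (fun V W g => triv_hom g) _ _);
  intros; apply pmod_hom_eq; reflexivity.
Defined.

End PartialComodules.

(** The trivial datum has [π = r⁻¹ ∘ (V ⊗ ε)] and [ρ = id]; since [ε], hence
    [V ⊗ ε], is epi, every pushout in the definition of a geometric partial
    comodule can be computed explicitly.  [X • k] is [V] itself, which gives
    QPC1.  The counit law makes [(π ⊗ H) ∘ a⁻¹ ∘ (V ⊗ Δ)] the identity, so
    pasting the pushouts defining [X • (H ⊗ H)] and [X • (H • H)] yields a
    pushout of [π] along the identity, exactly as [(X • H) • H] is; the
    comparison isomorphism between them is [θ_X], and QPC2 follows.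

    For the adjunction, QPC1 says that [π_{X,ε}] is invertible, so any
    [f : X → B] extends to [f ∘ r⁻¹ ∘ π_{X,ε}⁻¹ ∘ (X • ε) : X • H → B], and
    this extension is unique because [π_X] is epi: morphisms into a trivial
    partial comodule are determined by their underlying morphism. *)

From Stdlib Require Import ClassicalEpsilon.

Set Implicit Arguments.
Unset Strict Implicit.

Ltac cat_simpl :=
  repeat (rewrite <- comp_assoc || rewrite comp_idl || rewrite comp_idr).

Section CategoryFacts.

Variable K : Category.

Lemma comp_eq_assoc (A B B' X Y : K) (x : hom B X) (y : hom A B) (z : hom B' X)
    (w : hom A B') (k : hom Y A) :
  x ∘ y = z ∘ w -> x ∘ (y ∘ k) = z ∘ (w ∘ k).
Proof. intros E; rewrite !comp_assoc, E; reflexivity. Qed.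

Lemma comp_eq_assoc1 (A B X Y : K) (x : hom B X) (y : hom A B) (z : hom A X)
    (k : hom Y A) :
  x ∘ y = z -> x ∘ (y ∘ k) = z ∘ k.
Proof. intros E; rewrite comp_assoc, E; reflexivity. Qed.

Lemma epi_comp (A B E : K) (f : hom A B) (g : hom B E) :
  epi f -> epi g -> epi (g ∘ f).
Proof.
  intros Hf Hg Z u v Euv; apply Hg, Hf; rewrite <- !comp_assoc; exact Euv.
Qed.

Lemma epi_of_section (A B : K) (e : hom A B) (s : hom B A) :
  e ∘ s = idm B -> epi e.
Proof.
  intros Hs Z u v Euv.
  rewrite <- (comp_idr u), <- (comp_idr v), <- Hs, !comp_assoc, Euv; reflexivity.
Qed.

Lemma is_iso_comp (A B E : K) (f : hom A B) (g : hom B E) :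
  is_iso f -> is_iso g -> is_iso (g ∘ f).
Proof.
  intros [f' [Hf1 Hf2]] [g' [Hg1 Hg2]]; exists (f' ∘ g'); split.
  - rewrite <- comp_assoc, (comp_assoc f g g'), Hg1, comp_idl; exact Hf1.
  - rewrite <- comp_assoc, (comp_assoc g' f' f), Hf2, comp_idl; exact Hg2.
Qed.

Lemma is_pushout_intro (A B C2 P : K) (f : hom A B) (g : hom A C2)
    (p1 : hom B P) (p2 : hom C2 P) :
  p1 ∘ f = p2 ∘ g ->
  (forall (Z : K) (u : hom B Z) (v : hom C2 Z),
      u ∘ f = v ∘ g -> exists h : hom P Z, h ∘ p1 = u /\ h ∘ p2 = v) ->
  (forall (Z : K) (h h' : hom P Z), h ∘ p1 = h' ∘ p1 -> h ∘ p2 = h' ∘ p2 -> h = h') ->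
  is_pushout f g p1 p2.
Proof.
  intros Hsq Hex Heq; split; [exact Hsq|].
  intros Z u v E; destruct (Hex Z u v E) as [h [Hh1 Hh2]].
  exists h; split; [auto|].
  intros h' [E1 E2]; apply Heq; congruence.
Qed.

Lemma pushout_hom_eq (A B C2 P : K) (f : hom A B) (g : hom A C2)
    (p1 : hom B P) (p2 : hom C2 P) (Z : K) (h h' : hom P Z) :
  is_pushout f g p1 p2 -> h ∘ p1 = h' ∘ p1 -> h ∘ p2 = h' ∘ p2 -> h = h'.
Proof.
  intros [Hsq Hu] E1 E2.
  destruct (Hu Z (h' ∘ p1) (h' ∘ p2)) as [k [_ Hk]].
  { rewrite <- !comp_assoc, Hsq; reflexivity. }
  transitivity k; [symmetry|]; apply Hk; auto.
Qed.

Lemma pushout_factor (A B C2 P : K) (f : hom A B) (g : hom A C2)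
    (p1 : hom B P) (p2 : hom C2 P) (Z : K) (u : hom B Z) (v : hom C2 Z) :
  is_pushout f g p1 p2 -> u ∘ f = v ∘ g -> exists h : hom P Z, h ∘ p1 = u /\ h ∘ p2 = v.
Proof. intros [_ Hu] E; destruct (Hu Z u v E) as [h [Hh _]]; eauto. Qed.

Lemma pushout_paste (A B C2 P : K) (f : hom A B) (g : hom A C2)
    (p1 : hom B P) (p2 : hom C2 P) (D Q : K) (g' : hom C2 D) (q1 : hom P Q) (q2 : hom D Q) :
  is_pushout f g p1 p2 -> is_pushout p2 g' q1 q2 ->
  is_pushout f (g' ∘ g) (q1 ∘ p1) q2.
Proof.
  intros P1 P2; pose proof (proj1 P1) as S1; pose proof (proj1 P2) as S2.
  apply is_pushout_intro.
  - rewrite <- comp_assoc, S1, comp_assoc, S2, comp_assoc; reflexivity.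
  - intros Z u v E.
    destruct (pushout_factor (u := u) (v := v ∘ g') P1) as [h1 [Hh1 Hh2]].
    { rewrite E, comp_assoc; reflexivity. }
    destruct (pushout_factor (u := h1) (v := v) P2) as [h [Hh Hv]]; [exact Hh2|].
    exists h; split; [rewrite comp_assoc, Hh|]; assumption.
  - intros Z h h' E1 E2; apply (pushout_hom_eq P2); [|exact E2].
    apply (pushout_hom_eq P1); rewrite <- !comp_assoc; [exact E1|].
    rewrite S2, !comp_assoc, E2; reflexivity.
Qed.

Lemma pushout_unique_iso (A B C2 P : K) (f : hom A B) (g : hom A C2)
    (p1 : hom B P) (p2 : hom C2 P) (Q : K) (q1 : hom B Q) (q2 : hom C2 Q) :
  is_pushout f g p1 p2 -> is_pushout f g q1 q2 ->
  exists theta : hom P Q, theta ∘ p1 = q1 /\ theta ∘ p2 = q2 /\ is_iso theta.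
Proof.
  intros HP HQ.
  destruct (pushout_factor (u := q1) (v := q2) HP) as [t [Ht1 Ht2]]; [exact (proj1 HQ)|].
  destruct (pushout_factor (u := p1) (v := p2) HQ) as [s [Hs1 Hs2]]; [exact (proj1 HP)|].
  exists t; repeat split; auto; exists s; split.
  - apply (pushout_hom_eq HP); rewrite <- comp_assoc, comp_idl; congruence.
  - apply (pushout_hom_eq HQ); rewrite <- comp_assoc, comp_idl; congruence.
Qed.

Lemma epi_cokernel_pair (A B : K) (e : hom A B) :
  epi e <-> is_pushout e e (idm B) (idm B).
Proof.
  split.
  - intros He; apply is_pushout_intro; [reflexivity| |].
    + intros Z u v E; exists u; rewrite (He Z u v E), comp_idr; auto.
    + intros Z h h' E _; rewrite !comp_idr in E; exact E.
  - intros HP Z u v E.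
    destruct (pushout_factor HP E) as [h [Hu Hv]].
    rewrite comp_idr in Hu, Hv; congruence.
Qed.

Lemma pushout_epi_factor (A B C2 : K) (g : hom A C2) (k : hom C2 B) :
  epi g -> is_pushout (k ∘ g) g (idm B) k.
Proof.
  intros Hg; apply is_pushout_intro.
  - apply comp_idl.
  - intros Z u v E; exists u; split; [apply comp_idr|].
    apply Hg; rewrite <- comp_assoc; exact E.
  - intros Z h h' E _; rewrite !comp_idr in E; exact E.
Qed.

End CategoryFacts.

Ltac comp_rewrite E :=
  first [rewrite E | rewrite (comp_eq_assoc _ E) | rewrite (comp_eq_assoc1 _ E)]; cat_simpl.

Section MonoidalFacts.

Variable C : BraidedMonoidalCat.

Lemma runitI_nat (V W : C) (g : hom V W) :
  g ∘ runitI V = runitI W ∘ (g ⊠ idm unitob).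
Proof.
  transitivity (runitI W ∘ ((g ⊠ idm unitob) ∘ (runit V ∘ runitI V))).
  - rewrite (comp_assoc (runitI V) (runit V)), <- runit_nat.
    rewrite !comp_assoc, runit_inv1, comp_idl; reflexivity.
  - rewrite runit_inv2, comp_idr; reflexivity.
Qed.

Lemma assocI_nat (X X' Y Y' Z Z' : C) (f : hom X X') (g : hom Y Y') (h : hom Z Z') :
  assocI X' Y' Z' ∘ (f ⊠ (g ⊠ h)) = ((f ⊠ g) ⊠ h) ∘ assocI X Y Z.
Proof.
  transitivity (assocI X' Y' Z' ∘ (f ⊠ (g ⊠ h)) ∘ (assoc X Y Z ∘ assocI X Y Z)).
  - rewrite assoc_inv2, comp_idr; reflexivity.
  - rewrite !comp_assoc, <- (comp_assoc _ _ (assocI X' Y' Z')), <- assoc_nat,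
      !comp_assoc, assoc_inv1, comp_idl; reflexivity.
Qed.

Lemma is_iso_runitI (V : C) : is_iso (runitI V).
Proof. exists (runit V); split; [apply runit_inv2 | apply runit_inv1]. Qed.

Lemma tensor_epi (Hpres : tensor_preserves_pushouts C) (Y A B : C) (e : hom A B) :
  epi e -> epi (idm Y ⊠ e).
Proof.
  intros He; apply epi_cokernel_pair.
  destruct (Hpres Y _ _ _ _ _ _ _ _ (proj1 (epi_cokernel_pair e) He)) as [_ HY].
  rewrite tensm_id in HY; exact HY.
Qed.

Lemma counit_splits_comul (H : Coalgebra C) (V : C) :
  ((runitI V ∘ (idm V ⊠ counit H)) ⊠ idm (carrier H)) ∘ assocI V _ _
    ∘ (idm V ⊠ comul H) = idm (V ⊗ carrier H).
Proof.
  (* naturality of [a⁻¹], the left counit law, then the triangle identity *)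
  rewrite <- (comp_idl (idm (carrier H))), tensm_comp, <- !comp_assoc,
    (comp_assoc (idm V ⊠ comul H)), <- assocI_nat, <- comp_assoc, <- tensm_comp,
    comp_idl, counit_l, <- triangle, (comp_assoc (runit V ⊠ idm _)), assoc_inv1,
    comp_idl, <- tensm_comp, runit_inv1, comp_idl, tensm_id.
  reflexivity.
Qed.

End MonoidalFacts.

Section TrivialComodule.

Variables (C : BraidedMonoidalCat) (PO : HasPushouts C) (H : Coalgebra C).
Hypothesis Hpres : tensor_preserves_pushouts C.
Hypothesis Heps : epi (counit H).

Local Notation Hc := (carrier H).

Lemma triv_pdatum (V : C) : is_pdatum (triv H V).
Proof.
  apply epi_comp; [exact (tensor_epi Hpres (Y := V) Heps)|].
  exact (epi_of_section (runit_inv1 V)).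
Qed.

Lemma triv_QPC1 (V : C) : QPC1 PO (triv H V).
Proof.
  assert (Peps : is_pushout (runitI V ∘ (idm V ⊠ counit H)) (idm V ⊠ counit H)
                   (bullet_eps PO (triv H V)) (pi_eps PO (triv H V)))
    by exact (po_spec _ _ _).
  destruct (pushout_unique_iso
              (pushout_epi_factor (runitI V) (tensor_epi Hpres (Y := V) Heps)) Peps)
    as [theta [Hbullet [Hpi Hiso]]].
  rewrite comp_idr in Hbullet.
  unfold QPC1; split; rewrite <- Hpi; [|rewrite <- Hbullet].
  - exact (is_iso_comp (is_iso_runitI V) Hiso).
  - rewrite <- comp_assoc, runit_inv1; reflexivity.
Qed.

Lemma triv_pushout_rho (V : C) :
  is_pushout (ppi (triv H V)) (idm (V ⊗ Hc))
    (rho_bullet PO (triv H V)) (pi_XH PO (triv H V)).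
Proof. rewrite <- tensm_id; exact (po_spec _ _ _). Qed.

Lemma triv_pushout_pasted (V : C) :
  is_pushout (ppi (triv H V)) (idm (V ⊗ Hc))
    (pi' PO (triv H V) ∘ bullet_Delta PO (triv H V)) (pi'_Delta PO (triv H V)).
Proof.
  rewrite <- (counit_splits_comul H V).
  eapply pushout_paste; exact (po_spec _ _ _).
Qed.

Lemma triv_theta (V : C) :
  exists thetaX : hom (XHbH PO (triv H V)) (XHH PO (triv H V)),
    thetaX ∘ pi'_Delta PO (triv H V) = pi_XH PO (triv H V) /\ is_iso thetaX.
Proof.
  destruct (pushout_unique_iso (triv_pushout_pasted V) (triv_pushout_rho V))
    as [theta [_ [Htheta Hiso]]].
  exists theta; auto.
Qed.

Lemma triv_QPC2 (V : C) : QPC2 PO (triv H V).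
Proof.
  unfold QPC2; apply triv_pdatum.
  pose proof (proj1 (triv_pushout_rho V)) as Srho.
  pose proof (proj1 (triv_pushout_pasted V)) as Spasted.
  pose proof (proj1 (po_spec PO (pi_XH PO (triv H V)) (pi'_Delta PO (triv H V)))) as STheta.
  rewrite <- comp_assoc in Spasted.
  cat_simpl; comp_rewrite Srho; comp_rewrite Spasted; exact STheta.
Qed.

Lemma triv_geometric (V : C) : is_geometric PO (triv H V).
Proof.
  destruct (triv_theta V) as [theta Htheta].
  split; [split; [apply triv_QPC1 | apply triv_QPC2] | exists theta; exact Htheta].
Qed.

End TrivialComodule.

Section TrivialAdjunction.

Variables (C : BraidedMonoidalCat) (PO : HasPushouts C) (H : Coalgebra C).

Lemma pvariant_quasi (v : pvariant) (D : pquad H) :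
  pvariant_pred PO v D -> is_quasi PO D.
Proof. destruct v; [exact id | intros [Q _]; exact Q ..]. Qed.

Lemma triv_pmorph_diag (V W : C) (f : hom V W) (fH : hom V W) :
  is_pmorph (D := triv H V) (E := triv H W) f fH -> fH = f.
Proof. intros [E _]; simpl in E; rewrite comp_idl, comp_idr in E; exact E. Qed.

Lemma QPC1_extend (D : pquad H) (B : C) (f : hom (pX D) B) :
  QPC1 PO D -> exists fH : hom (pXH D) B, is_pmorph (D := D) (E := triv H B) f fH.
Proof.
  intros [[j [Hj1 _]] Hrho].
  assert (Sbullet : bullet_eps PO D ∘ ppi D = pi_eps PO D ∘ (idm (pX D) ⊠ counit H))
    by exact (proj1 (po_spec _ _ _)).
  exists (f ∘ runitI (pX D) ∘ j ∘ bullet_eps PO D); split; simpl; cat_simpl.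
  - comp_rewrite Hrho; comp_rewrite Hj1; comp_rewrite (runit_inv1 (pX D)); reflexivity.
  - comp_rewrite Sbullet; comp_rewrite Hj1.
    rewrite comp_assoc, runitI_nat, <- comp_assoc, <- !tensm_comp; cat_simpl.
    reflexivity.
Qed.

Lemma pmod_hom_triv_eq (D : pquad H) (B : C) (m n : pmod_hom D (triv H B)) :
  is_pdatum D -> ph_f m = ph_f n -> m = n.
Proof.
  destruct m as [f fH Hm], n as [g gH Hn]; simpl; intros Hpi Efg; subst g.
  apply pmod_hom_eq; [reflexivity|].
  apply Hpi; change (fH ∘ ppi D = gH ∘ ppi D).
  rewrite (proj2 Hm), (proj2 Hn); reflexivity.
Qed.

(* [π_{X,ε}] is only known to be invertible propositionally, hence the choice. *)
Definition triv_transpose (v : pvariant) (A : pmod_ob PO H v) (B : C)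
    (f : hom (pX (proj1_sig A)) B) : pmod_hom (proj1_sig A) (triv H B) :=
  let A_quasi := pvariant_quasi (proj2 (proj2_sig A)) in
  Build_pmod_hom
    (proj2_sig (constructive_indefinite_description _ (QPC1_extend f (proj1 A_quasi)))).

End TrivialAdjunction.

Theorem mainTheorem5
  (C : BraidedMonoidalCat) (PO : HasPushouts C)
  (Hpres : tensor_preserves_pushouts C)
  (H : Coalgebra C) (Heps : epi (counit H)) :
  (* the trivial quadruple (V, V, r_V^{-1} ∘ (V ⊗ ε), id_V) is a partial
     comodule datum and a geometric partial comodule *)
  (forall V : C, is_pdatum (triv H V) /\ is_geometric PO (triv H V)) /\
  (* for PMod^H any of qPMod^H, lPMod^H, gPMod^H, the functor T is fully
     faithful and right adjoint to the forgetful functor U *)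
  (forall (v : pvariant) (hT : forall V : C, in_PMod PO v (triv H V)),
      fully_faithful (trivT hT) /\ adjunction (forgetU PO H v) (trivT hT)).
Proof.
  split.
  - intros V; split; [apply triv_pdatum | apply triv_geometric]; assumption.
  - intros v hT; split.
    + intros V W; exists (fun m => ph_f m); split; [reflexivity|].
      intros m; apply pmod_hom_eq; [reflexivity|].
      symmetry; exact (triv_pmorph_diag (ph_spec m)).
    + exists (fun A B f => triv_transpose f); split.
      * intros A B; exists (fun m => ph_f m); split; [reflexivity|].
        intros m; apply pmod_hom_triv_eq; [exact (proj1 (proj2_sig A)) | reflexivity].
      * intros A A' B B' h f g.
        apply pmod_hom_triv_eq; [exact (proj1 (proj2_sig A')) | reflexivity].
Qed.
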